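(* Let $(V,\mu)$ be an infinite, connected, locally finite weighted graph, let $1<s<\infty$, and let $\sigma\in\ell^+(V)$ satisfy $G\sigma(x)<\infty$ for every $x\in V$. Then for all $x\in V$, $$[G\sigma(x)]^s\le s\,G\big[(G\sigma)^{s-1}\sigma\big](x).$$
   Context: Weighted graph: $\mu_{xy}=\mu_{yx}\ge0$, $\mu_{xy}>0$ iff $x\sim y$, $\mu(x)=\sum_{y\sim x}\mu_{xy}$. Random walk $P(x,y)=\mu_{xy}/\mu(x)$, $P_n(x,y)=\mathbb P_x[X_n=y]$, Green function $g(x,y)=\sum_{n\ge0}P_n(x,y)/\mu(y)\in(0,\infty]$, Green operator $Gf(x)=\sum_{y\in V}g(x,y)f(y)\mu(y)$. *)

From HB Require Import structures.
From mathcomp Require Import all_boot all_order all_algebra.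
From mathcomp Require Import all_classical all_reals all_analysis.
From Stdlib Require Import Relations.
Set Implicit Arguments. Unset Strict Implicit. Unset Printing Implicit Defensive.
Import Order.TTheory GRing.Theory Num.Theory.
Local Open Scope classical_set_scope.
Local Open Scope ring_scope.

Section WeightedGraph.
Variables (R : realType) (V : choiceType) (mu : V -> V -> R).

Definition adj (x y : V) : Prop := 0 < mu x y.

Definition is_weighted_graph : Prop :=
  (forall x y, mu x y = mu y x) /\ (forall x y, 0 <= mu x y).

Definition locally_finite : Prop := forall x, finite_set [set y | adj x y].

Definition connected_graph : Prop := forall x y, clos_refl_trans V adj x y.

Definition infinite_graph : Prop := infinite_set [set: V].

Definition muv (x : V) : R := \sum_(y \in [set y | adj x y]) mu x y.

Definition Ptr (x y : V) : R := mu x y / muv x.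

Fixpoint Pn (n : nat) (x y : V) : \bar R :=
  match n with
  | 0 => (if x == y then 1 else 0)%:E
  | n'.+1 => \esum_(z in [set: V]) ((Ptr x z)%:E * Pn n' z y)%E
  end.

Definition green (x y : V) : \bar R :=
  \esum_(n in [set: nat]) (Pn n x y * ((muv y)^-1)%:E)%E.

Definition Gop (f : V -> R) (x : V) : \bar R :=
  \esum_(y in [set: V]) (green x y * (f y * muv y)%:E)%E.

End WeightedGraph.

From HB Require Import structures.
From mathcomp Require Import all_boot all_order all_algebra.
From mathcomp Require Import all_classical all_reals all_analysis.
From mathcomp Require Import finmap ring lra.
Import Order.TTheory GRing.Theory Num.Theory.
Local Open Scope classical_set_scope.
Local Open Scope ring_scope.
Set Implicit Arguments.
Unset Strict Implicit.
Unset Printing Implicit Defensive.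

(* Write G sigma = sum_n P^n sigma and let u_N = sum_(n < N) P^n sigma be the
   partial sums, so that u_(N+1) = sigma + P u_N with P sub-stochastic.
   Young's inequality s a^(s-1) b <= b^s + (s-1) a^s, applied with a = u_(N+1)(x)
   and b = u_N(z) and averaged over z, gives
   u_(N+1)^s <= s u_(N+1)^(s-1) sigma + P (u_N^s), and u_(N+1) <= G sigma turns
   this into the induction step of u_N^s <= s sum_(n < N) P^n ((G sigma)^(s-1) sigma). *)

Section power_inequalities.
Variable R : realType.
Implicit Types a b c s : R.

Lemma powR_le_powRV s a b : 0 < s -> 0 <= a -> 0 <= b ->
  (a `^ s <= b) = (a <= b `^ s^-1).
Proof.
move=> s0 a0 b0; have sV0 : 0 <= s^-1 by rewrite invr_ge0 ltW.
apply/idP/idP => [/(ge0_ler_powR sV0)|/(ge0_ler_powR (ltW s0))].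
- by rewrite -powRrM mulfV ?gt_eqF // powRr1 //; apply; rewrite nnegrE ?powR_ge0.
- by rewrite -powRrM mulVf ?gt_eqF // powRr1 //; apply; rewrite nnegrE ?powR_ge0.
Qed.

(* Young's inequality with the conjugate exponents s / (s - 1) and s. *)
Lemma powR_tangent s a b : 1 < s -> 0 <= a -> 0 <= b ->
  s * (a `^ (s - 1) * b) <= b `^ s + (s - 1) * a `^ s.
Proof.
move=> s1 a0 b0; have s0 : 0 < s by apply: lt_trans s1.
have s10 : 0 < s - 1 by rewrite subr_gt0.
pose p := s / (s - 1); have p0 : 0 < p by rewrite divr_gt0.
have pq : p^-1 + s^-1 = 1 by rewrite /p invf_div; field; rewrite ?gt_eqF.
have young := conjugate_powR (powR_ge0 a (s - 1)) b0 p0 s0 pq.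
rewrite -powRrM (_ : (s - 1) * p = s) in young; last by rewrite /p; field; rewrite gt_eqF.
have -> : b `^ s + (s - 1) * a `^ s = s * (a `^ s / p + b `^ s / s).
  by rewrite /p; field; rewrite ?gt_eqF.
by rewrite ler_wpM2l // ltW.
Qed.

Lemma powR_shifted_mean_le (T : Type) (r : seq T) (p v : T -> R) s c :
  1 < s -> 0 <= c -> (forall z, 0 <= p z) -> (forall z, 0 <= v z) ->
  \sum_(z <- r) p z <= 1 ->
  (c + \sum_(z <- r) p z * v z) `^ s <=
    s * ((c + \sum_(z <- r) p z * v z) `^ (s - 1) * c) + \sum_(z <- r) p z * v z `^ s.
Proof.
move=> s1 c0 p0 v0 sum_p.
have s0 : 0 < s by apply: lt_trans s1.
set w := \sum_(z <- r) p z * v z; set m := c + w.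
have m0 : 0 <= m by rewrite addr_ge0 // sumr_ge0 // => z _; rewrite mulr_ge0.
have msE : m `^ s = m `^ (s - 1) * (c + w) by rewrite mulrC mulr_powRB1.
have ms0 : 0 <= m `^ s by rewrite powR_ge0.
have ms10 : 0 <= m `^ (s - 1) by rewrite powR_ge0.
have tangent : s * (m `^ (s - 1) * w) <=
    \sum_(z <- r) p z * v z `^ s + (s - 1) * m `^ s * \sum_(z <- r) p z.
  rewrite /w !mulr_sumr -big_split /=; apply: ler_sum => z _.
  by move: (ler_wpM2l (p0 z) (powR_tangent s1 m0 (v0 z))); lra.
have : (s - 1) * m `^ s * \sum_(z <- r) p z <= (s - 1) * m `^ s.
  by rewrite ler_piMr // mulr_ge0 // subr_ge0 ltW.
nra.
Qed.

End power_inequalities.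

Section extended_sums.
Variable R : realType.
Local Open Scope ereal_scope.

Lemma ge0_esumZl (T : choiceType) (S : set T) (r : R) (a : T -> \bar R) :
  (0 <= r)%R -> (forall i, 0 <= a i) ->
  \esum_(i in S) (r%:E * a i) = r%:E * \esum_(i in S) a i.
Proof.
move=> r0 a0; rewrite /esum -ereal_supZl //; last first.
  by apply/set0P; exists 0; exists set0; [exact: fsets_set0|rewrite fsbig_set0].
congr ereal_sup; apply/seteqP; split => [_ /= [X XS <-]|_ /= [_ [Y YS <-] <-]].
- by exists (\sum_(x \in X) a x); [exists X|rewrite ge0_mule_fsumr].
- by exists Y => //; rewrite ge0_mule_fsumr.
Qed.

Lemma exchange_esum (T1 T2 : choiceType) (a : T1 -> T2 -> \bar R) :
  (forall i j, 0 <= a i j) ->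
  \esum_(i in [set: T1]) \esum_(j in [set: T2]) a i j =
  \esum_(j in [set: T2]) \esum_(i in [set: T1]) a i j.
Proof.
move=> a0; rewrite !esum_esum //.
rewrite (reindex_esum ([set: T2] `*`` (fun=> [set: T1]))
   ([set: T1] `*`` (fun=> [set: T2])) (fun x => (x.2, x.1))) //.
split => [[i j] _ //|[i1 i2] [j1 j2] _ _ [-> ->] //|[i1 i2] _].
by exists (i2, i1).
Qed.

Lemma esum_finite_support (T : choiceType) (S : set T) (a : T -> \bar R) :
  finite_set S -> (forall i, 0 <= a i) -> (forall i, ~ S i -> a i = 0) ->
  \esum_(i in [set: T]) a i = \sum_(i <- enum_fset (fset_set S)) a i.
Proof.
move=> finS a0 aS; rewrite -fsbig_finite // -esum_fset // [RHS]esum_mkcond.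
apply: eq_esum => i _; case: ifPn => // /negP iS.
by rewrite aS // => Si; apply: iS; exact: mem_set.
Qed.

Lemma partial_le_esum_nat (a : nat -> \bar R) N : (forall n, 0 <= a n) ->
  \sum_(n < N) a n <= \esum_(n in [set: nat]) a n.
Proof.
move=> a0; rewrite -nneseries_esumT // -(big_mkord xpredT).
exact: nneseries_lim_ge.
Qed.

Lemma esum_nat_le (a : nat -> \bar R) M : (forall n, 0 <= a n) ->
  (forall N, \sum_(n < N) a n <= M) -> \esum_(n in [set: nat]) a n <= M.
Proof.
move=> a0 aM; rewrite -nneseries_esumT //; apply: lime_le.
  exact: is_cvg_nneseries.
by apply: nearW => N; rewrite big_mkord.
Qed.

Lemma esum_nat_fine_powR_le (s : R) (a : nat -> \bar R) t : (0 < s)%R ->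
  (forall n, 0 <= a n) -> \esum_(n in [set: nat]) a n < +oo ->
  (forall N, ((fine (\sum_(n < N) a n)) `^ s)%:E <= t) ->
  ((fine (\esum_(n in [set: nat]) a n)) `^ s)%:E <= t.
Proof.
move=> s0 a0 sum_fin le_t.
have t0 : 0 <= t by apply: le_trans (le_t 0%N); rewrite lee_fin powR_ge0.
have [->|tNy] := eqVneq t +oo; first exact: leey.
have t_fin : t \is a fin_num by rewrite ge0_fin_numE // ltey.
have fine_ge0K (b : \bar R) : 0 <= b -> b < +oo -> (fine b)%:E = b.
  by move=> b0 bfin; rewrite fineK // ge0_fin_numE.
have esum0 : 0 <= \esum_(n in [set: nat]) a n by rewrite esum_ge0.
rewrite -(fineK t_fin) lee_fin powR_le_powRV ?fine_ge0 //.
rewrite -lee_fin fine_ge0K //; apply: esum_nat_le => // N.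
have sum0 : 0 <= \sum_(n < N) a n by rewrite sume_ge0.
have sum_lt : \sum_(n < N) a n < +oo.
  exact: le_lt_trans (partial_le_esum_nat N a0) sum_fin.
by rewrite -(fine_ge0K _ sum0 sum_lt) lee_fin -powR_le_powRV ?fine_ge0 // -lee_fin fineK.
Qed.

End extended_sums.

Section random_walk.
Variables (R : realType) (V : choiceType) (mu : V -> V -> R).
Hypotheses (hgraph : is_weighted_graph mu) (hlf : locally_finite mu).
Local Open Scope ereal_scope.

Definition neighbours (x : V) : seq V := enum_fset (fset_set [set y | adj mu x y]).

Lemma mu_ge0 x y : (0 <= mu x y)%R.
Proof. by case: hgraph. Qed.

Lemma muvE x : muv mu x = (\sum_(y <- neighbours x) mu x y)%R.
Proof. exact: fsbig_finite (hlf x). Qed.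

Lemma muv_ge0 x : (0 <= muv mu x)%R.
Proof. by apply: fsumr_ge0 => y _; exact: mu_ge0. Qed.

Lemma Ptr_ge0 x y : (0 <= Ptr mu x y)%R.
Proof. by rewrite divr_ge0 ?mu_ge0 ?muv_ge0. Qed.

Lemma Ptr_eq0 x y : ~ adj mu x y -> Ptr mu x y = 0%R.
Proof.
move=> /negP; rewrite /adj -leNgt => mu_le0.
by rewrite /Ptr (_ : mu x y = 0%R) ?mul0r //; apply/eqP; rewrite eq_le mu_le0 mu_ge0.
Qed.

Lemma sum_Ptr_le1 x : (\sum_(y <- neighbours x) Ptr mu x y <= 1)%R.
Proof.
rewrite -mulr_suml -muvE; have [->|mux0] := eqVneq (muv mu x) 0%R.
  by rewrite mul0r.
by rewrite mulfV.
Qed.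

Lemma esum_Ptr x (h : V -> \bar R) : (forall y, 0 <= h y) ->
  \esum_(y in [set: V]) ((Ptr mu x y)%:E * h y) =
  \sum_(y <- neighbours x) (Ptr mu x y)%:E * h y.
Proof.
move=> h0; apply: esum_finite_support => [|y|y /Ptr_eq0 ->]; last exact: mul0e.
- exact: hlf.
- by rewrite mule_ge0 // lee_fin Ptr_ge0.
Qed.

Lemma Pn_ge0 n x y : 0 <= Pn mu n x y.
Proof.
elim: n x => [|n IH] x /=; first by case: ifP.
by apply: esum_ge0 => z _; rewrite mule_ge0 // lee_fin Ptr_ge0.
Qed.

Lemma PnS n x y :
  Pn mu n.+1 x y = \sum_(z <- neighbours x) (Ptr mu x z)%:E * Pn mu n z y.
Proof. by rewrite /= esum_Ptr // => z; exact: Pn_ge0. Qed.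

Definition transition_pow n (g : V -> \bar R) x :=
  \esum_(y in [set: V]) (Pn mu n x y * g y).

Lemma transition_pow_ge0 n g x : (forall y, 0 <= g y) -> 0 <= transition_pow n g x.
Proof. by move=> g0; apply: esum_ge0 => y _; rewrite mule_ge0 // Pn_ge0. Qed.

Lemma transition_pow0 g x : (forall y, 0 <= g y) -> transition_pow 0 g x = g x.
Proof.
move=> g0; rewrite /transition_pow (esum_finite_support (S := [set x])) //.
- by rewrite fset_set1 big_seq_fset1 /= eqxx mul1e.
- by move=> y; rewrite mule_ge0 ?Pn_ge0.
- by move=> y /eqP; rewrite eq_sym => /negbTE /= ->; rewrite mul0e.
Qed.

Lemma transition_powS n g x : (forall y, 0 <= g y) ->
  transition_pow n.+1 g x =
  \sum_(z <- neighbours x) (Ptr mu x z)%:E * transition_pow n g z.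
Proof.
move=> g0; have Pg0 z y : 0 <= (Ptr mu x z)%:E * Pn mu n z y * g y.
  by rewrite !mule_ge0 ?lee_fin ?Ptr_ge0 ?Pn_ge0.
have PnSg y : Pn mu n.+1 x y * g y =
    \sum_(z <- neighbours x) (Ptr mu x z)%:E * Pn mu n z y * g y.
  by rewrite PnS ge0_sume_distrl // => z _; rewrite mule_ge0 ?lee_fin ?Ptr_ge0 ?Pn_ge0.
rewrite /transition_pow (eq_esum (fun y _ => PnSg y)) esum_sum; last by move=> *.
apply: eq_bigr => z _; rewrite -ge0_esumZl ?Ptr_ge0 //; last first.
  by move=> y; rewrite mule_ge0 ?Pn_ge0.
by apply: eq_esum => y _; rewrite muleA.
Qed.

Definition partial_green N (g : V -> \bar R) x := \sum_(n < N) transition_pow n g x.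

Lemma partial_green_ge0 N g x : (forall y, 0 <= g y) -> 0 <= partial_green N g x.
Proof. by move=> g0; rewrite sume_ge0 // => n _; exact: transition_pow_ge0. Qed.

Lemma partial_greenS N g x : (forall y, 0 <= g y) ->
  partial_green N.+1 g x =
  g x + \sum_(z <- neighbours x) (Ptr mu x z)%:E * partial_green N g z.
Proof.
move=> g0; rewrite /partial_green big_ord_recl transition_pow0 //; congr (_ + _).
under eq_bigr do rewrite lift0 transition_powS //.
rewrite exchange_big /=; apply: eq_bigr => z _.
by rewrite ge0_sume_distrr // => n _; exact: transition_pow_ge0.
Qed.

(* Equal to 1 unless [muv mu y = 0], where it is 0 because [0^-1 = 0]. *)
Definition mass_ratio y : R := ((muv mu y)^-1 * muv mu y)%R.

Lemma mass_ratio_ge0 y : (0 <= mass_ratio y)%R.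
Proof. by rewrite mulr_ge0 ?invr_ge0 ?muv_ge0. Qed.

Lemma GopE (f : V -> R) x : (forall y, 0 <= f y)%R ->
  Gop mu f x =
  \esum_(n in [set: nat]) transition_pow n (fun y => (f y * mass_ratio y)%:E) x.
Proof.
move=> f0; rewrite /Gop /transition_pow -exchange_esum; last first.
  by move=> n y; rewrite mule_ge0 ?Pn_ge0 // lee_fin mulr_ge0 ?mass_ratio_ge0.
apply: eq_esum => y _; rewrite /green muleC -ge0_esumZl; last 2 first.
- by rewrite mulr_ge0 ?muv_ge0.
- by move=> n; rewrite mule_ge0 ?Pn_ge0 // lee_fin invr_ge0 muv_ge0.
apply: eq_esum => n _; rewrite muleC -muleA -EFinM /mass_ratio.
by congr (_ * _%:E); ring.
Qed.

Lemma Gop_ge0 (f : V -> R) x : (forall y, 0 <= f y)%R -> 0 <= Gop mu f x.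
Proof.
move=> f0; rewrite GopE // esum_ge0 // => n _; apply: transition_pow_ge0 => y.
by rewrite lee_fin mulr_ge0 ?mass_ratio_ge0.
Qed.

Lemma partial_green_le_Gop (f : V -> R) N x : (forall y, 0 <= f y)%R ->
  partial_green N (fun y => (f y * mass_ratio y)%:E) x <= Gop mu f x.
Proof.
move=> f0; rewrite GopE //; apply: partial_le_esum_nat => n.
by apply: transition_pow_ge0 => y; rewrite lee_fin mulr_ge0 ?mass_ratio_ge0.
Qed.

Lemma partial_green_powR_le (s : R) (g u : V -> R) N x : (1 < s)%R ->
  (forall y, 0 <= g y)%R ->
  (forall N y, partial_green N (fun y => (g y)%:E) y <= (u y)%:E) ->
  ((fine (partial_green N (fun y => (g y)%:E) x)) `^ s)%:E <=
    s%:E * partial_green N (fun y => (u y `^ (s - 1) * g y)%:E) x.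
Proof.
move=> s1 g0 le_u; have s0 : (0 < s)%R by apply: lt_trans s1.
have gE0 y : 0 <= (g y)%:E by rewrite lee_fin.
have F0 y : 0 <= (u y `^ (s - 1) * g y)%:E by rewrite lee_fin mulr_ge0 ?powR_ge0.
pose uN k y := fine (partial_green k (fun y => (g y)%:E) y).
have uNE k y : (uN k y)%:E = partial_green k (fun y => (g y)%:E) y.
  rewrite fineK // ge0_fin_numE ?partial_green_ge0 //.
  exact: le_lt_trans (le_u k y) (ltry _).
have uN0 k y : (0 <= uN k y)%R by rewrite -lee_fin uNE partial_green_ge0.
have uN_le_u k y : (uN k y <= u y)%R by rewrite -lee_fin uNE.
have u0 y : (0 <= u y)%R := le_trans (uN0 0%N y) (uN_le_u 0%N y).
have uNS k y : uN k.+1 y = (g y + \sum_(z <- neighbours y) Ptr mu y z * uN k z)%R.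
  apply: EFin_inj; rewrite uNE partial_greenS // EFinD -sumEFin; congr (_ + _).
  by apply: eq_bigr => z _; rewrite -uNE.
rewrite -/(uN N x); elim: N x => [|N IH] x.
  by rewrite /uN /partial_green !big_ord0 /= powR0 ?gt_eqF // mule0.
have step : (uN N.+1 x `^ s <= s * (u x `^ (s - 1) * g x) +
    \sum_(z <- neighbours x) Ptr mu x z * uN N z `^ s)%R.
  rewrite uNS; apply: le_trans (powR_shifted_mean_le s1 (g0 x) (@Ptr_ge0 x)
    (uN0 N) (sum_Ptr_le1 x)) _.
  rewrite lerD2r ler_wpM2l ?(ltW s0) // ler_wpM2r // ge0_ler_powR ?nnegrE //.
  all: rewrite -?uNS ?uN0 ?uN_le_u ?u0 //.
  by rewrite subr_ge0 ltW.
apply: le_trans (_ : _ <= (s * (u x `^ (s - 1) * g x) +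
    \sum_(z <- neighbours x) Ptr mu x z * uN N z `^ s)%:E) _; first by rewrite lee_fin.
rewrite partial_greenS // ge0_muleDr ?F0 //; last first.
  by rewrite sume_ge0 // => z _; rewrite mule_ge0 ?lee_fin ?Ptr_ge0 ?partial_green_ge0.
rewrite EFinD EFinM leeD // -sumEFin ge0_sume_distrr; last first.
  by move=> z _; rewrite mule_ge0 ?lee_fin ?Ptr_ge0 ?partial_green_ge0.
by apply: lee_sum => z _; rewrite EFinM muleCA lee_wpmul2l ?lee_fin ?Ptr_ge0 ?IH.
Qed.

End random_walk.

Theorem lemma4p1 (R : realType) (V : choiceType) (mu : V -> V -> R)
  (hgraph : is_weighted_graph mu) (hinf : infinite_graph V)
  (hconn : connected_graph mu) (hlf : locally_finite mu)
  (s : R) (hs : 1 < s) (sigma : V -> R) (hsig : forall x, 0 <= sigma x)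
  (hfin : forall x, (Gop mu sigma x < +oo)%E) :
  forall x : V,
    (((fine (Gop mu sigma x)) `^ s)%R%:E
     <= s%:E * Gop mu (fun y => ((fine (Gop mu sigma y)) `^ (s - 1) * sigma y)%R) x)%E.
Proof.
move=> x; have s0 : 0 < s by apply: lt_trans hs.
pose g y := sigma y * mass_ratio mu y.
have g0 y : 0 <= g y by rewrite mulr_ge0 ?mass_ratio_ge0.
have le_G N y : (partial_green mu N (fun y => (g y)%:E) y <=
    (fine (Gop mu sigma y))%:E)%E.
  by rewrite fineK ?ge0_fin_numE ?Gop_ge0 ?hfin ?partial_green_le_Gop.
rewrite (GopE hgraph x hsig).
apply: (esum_nat_fine_powR_le s0) => [n||N]; first exact: transition_pow_ge0.
  by rewrite -GopE ?hfin.
apply: le_trans (partial_green_powR_le hgraph hlf N x hs g0 le_G) _.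
rewrite lee_wpmul2l ?lee_fin ?(ltW s0) //.
set u := fun y => fine (Gop mu sigma y).
have -> : (fun y => (u y `^ (s - 1) * g y)%:E) =
          (fun y => (u y `^ (s - 1) * sigma y * mass_ratio mu y)%:E).
  by apply/funext => y; rewrite /g mulrA.
by rewrite partial_green_le_Gop // => y; rewrite mulr_ge0 ?powR_ge0.
Qed.
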